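(* In the curved-exam game described in the context, fix a student $i$, an opponent profile $x_{-i}\in[0,1]^{n-1}$, an effort $x_i\in[0,1)$ and $\Delta x_i>0$ with $x_i+\Delta x_i<1$. Regard the difference $$\Delta\log U_i:=\log U_i(x_i+\Delta x_i,x_{-i};\alpha,m)-\log U_i(x_i,x_{-i};\alpha,m)$$ as a function of the parameters $(\alpha,m)=(\alpha_1,\dots,\alpha_n,m)\in(0,1)^{n+1}$. Then $\Delta\log U_i$ is non-increasing in the target mean $m$ and non-decreasing in each ability parameter $\alpha_j$, $j=1,\dots,n$ (wherever it is defined).
   Context: The curved-exam game: fix $n\ge2$, abilities $\alpha=(\alpha_1,\dots,\alpha_n)\in(0,1)^n$, target mean $m\in(0,1)$. Student $i$ chooses $x_i\in[0,1]$; $\bar x=\frac1n\sum_j x_j$, $\bar x_{-i}=\frac1{n-1}\sum_{j\neq i}x_j$. Grade $G_i(x;m)=x_i+\max(m-\bar x,0)$ (not truncated at 1); payoff $U_i(x;\alpha,m)=G_i(x;m)^{\alpha_i}(1-x_i)^{1-\alpha_i}$, with $\log 0=-\infty$. *)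

(* R : realType, extended reals for log 0 = -oo. *)
From HB Require Import structures.
From mathcomp Require Import all_boot all_order all_algebra.
From mathcomp Require Import all_classical all_reals all_analysis.
Set Implicit Arguments. Unset Strict Implicit. Unset Printing Implicit Defensive.
Import Order.TTheory GRing.Theory Num.Theory.
Local Open Scope ring_scope.

Definition elog (R : realType) (t : R) : \bar R :=
  if 0 < t then (ln t)%:E else -oo%E.

Definition upd (R : realType) (n : nat) (x : 'I_n -> R) (i : 'I_n) (y : R)
  : 'I_n -> R := fun j => if j == i then y else x j.

Definition mean (R : realType) (n : nat) (x : 'I_n -> R) : R :=
  (\sum_(j < n) x j) / n%:R.

(* grade G_i(x;m) = x_i + max(m - xbar, 0)  (not truncated) *)
Definition grade (R : realType) (n : nat) (x : 'I_n -> R) (i : 'I_n) (m : R) : R :=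
  x i + Num.max (m - mean x) 0.

Definition logU (R : realType) (n : nat) (x : 'I_n -> R) (i : 'I_n)
  (alpha : 'I_n -> R) (m : R) : \bar R :=
  ((alpha i)%:E * elog (grade x i m) + (1 - alpha i)%:E * elog (1 - x i))%E.

Definition dlogU (R : realType) (n : nat) (x : 'I_n -> R) (i : 'I_n)
  (xi dx : R) (alpha : 'I_n -> R) (m : R) : \bar R :=
  (logU (upd x i (xi + dx)) i alpha m - logU (upd x i xi) i alpha m)%E.

(** Write [c = m - x̄] for the shortfall of the class mean before student [i]
    moves and [d = Δx_i / n].  The grades before and after the move are
    [G0 = x_i + max(c, 0)] and [G1 = x_i + Δx_i + max(c - d, 0)], so
    [Δ log U_i = α_i log (G1 / G0) + (1 - α_i) log ((1 - x_i - Δx_i) / (1 - x_i))]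
    when [G0 > 0], and [Δ log U_i = +∞] when [G0 = 0].  Only [α_i] enters, with
    the non-negative coefficient [log (G1 / G0) - log ((1 - x_i - Δx_i) / (1 - x_i))]
    since [G0 <= G1].  The ratio [G1 / G0] is non-increasing in [c], hence in
    [m], by a case analysis on the signs of [c] and [c - d]. *)

From HB Require Import structures.
From mathcomp Require Import all_boot all_order all_algebra.
From mathcomp Require Import all_classical all_reals all_analysis.
From mathcomp Require Import ring lra.
Import Order.TTheory GRing.Theory Num.Theory.
Local Open Scope ring_scope.

Section CurvedExam.
Variable R : realType.
Implicit Types (a b g l c d y dy m : R).

Lemma max0_cases c : Num.max c 0 = c /\ 0 <= c \/ Num.max c 0 = 0 /\ c <= 0.
Proof.
rewrite maxEle; case: leP => [c_le0|c_gt0]; [right | left]; split => //.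
exact: ltW.
Qed.

Lemma shifted_max0_le y dy d c : 0 < d -> d <= dy ->
  y + Num.max c 0 <= y + dy + Num.max (c - d) 0.
Proof.
move=> d_gt0 d_le_dy.
by case: (max0_cases c) => -[-> ?]; case: (max0_cases (c - d)) => -[-> ?]; lra.
Qed.

Lemma shifted_max0_cross_le y dy d c (c' : R) :
  0 <= y -> 0 < d -> d <= dy -> c <= c' ->
  (y + dy + Num.max (c' - d) 0) * (y + Num.max c 0) <=
  (y + dy + Num.max (c - d) 0) * (y + Num.max c' 0).
Proof.
move=> y_ge0 d_gt0 d_le_dy le_cc'.
case: (max0_cases c) => -[-> ?]; case: (max0_cases c') => -[-> ?];
case: (max0_cases (c - d)) => -[-> ?]; case: (max0_cases (c' - d)) => -[-> ?];
nra.
Qed.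

Lemma convex_combination_monotone b (b' : R) g l :
  b <= b' -> 0 <= g -> l <= 0 ->
  b * g + (1 - b) * l <= b' * g + (1 - b') * l.
Proof. by move=> le_bb' g_ge0 l_le0; nra. Qed.

Lemma weighted_elog_diff a (G1 G0 p1 p0 : R) :
  0 < a -> 0 < G1 -> 0 < p1 -> 0 < p0 ->
  ((a%:E * elog G1 + (1 - a)%:E * elog p1) -
   (a%:E * elog G0 + (1 - a)%:E * elog p0))%E =
  if 0 < G0 then (a * (ln G1 - ln G0) + (1 - a) * (ln p1 - ln p0))%:E
  else +oo%E.
Proof.
move=> a_gt0 G1_gt0 p1_gt0 p0_gt0; rewrite /elog G1_gt0 p1_gt0 p0_gt0.
case: ifP => _; first by rewrite -!EFinM -!EFinD; congr (_%:E); ring.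
by rewrite mulrNy gtr0_sg // mul1e addNye -!EFinM -EFinD.
Qed.

Variables (n : nat) (i : 'I_n).

Lemma upd_same (x : 'I_n -> R) y : upd x i y i = y.
Proof. by rewrite /upd eqxx. Qed.

Lemma upd_other (x : 'I_n -> R) y j : j != i -> upd x i y j = x j.
Proof. by rewrite /upd => /negPf ->. Qed.

Lemma mean_upd_add (x : 'I_n -> R) y dy :
  mean (upd x i (y + dy)) = mean (upd x i y) + dy / n%:R.
Proof.
have sum_rest z : \sum_(j < n | j != i) upd x i z j = \sum_(j < n | j != i) x j.
  by apply: eq_bigr => j /(upd_other x z).
rewrite /mean -mulrDl (bigD1 i) // [in RHS](bigD1 i) //= !upd_same !sum_rest.
by rewrite addrAC.
Qed.

Lemma grade_upd (x : 'I_n -> R) y m :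
  grade (upd x i y) i m = y + Num.max (m - mean (upd x i y)) 0.
Proof. by rewrite /grade upd_same. Qed.

Variables (x : 'I_n -> R) (xi dx : R).
Hypotheses (xi_ge0 : 0 <= xi) (dx_gt0 : 0 < dx) (xi_dx_lt1 : xi + dx < 1).

Let G0 m := grade (upd x i xi) i m.
Let G1 m := grade (upd x i (xi + dx)) i m.
Let c m := m - mean (upd x i xi).
Let d := dx / n%:R.

Let G0E m : G0 m = xi + Num.max (c m) 0.
Proof. exact: grade_upd. Qed.

Let G1E m : G1 m = xi + dx + Num.max (c m - d) 0.
Proof. by rewrite /G1 grade_upd mean_upd_add /c opprD addrA. Qed.

Let n_gt0 : (0 < n)%N. Proof. exact: leq_ltn_trans (leq0n _) (ltn_ord i). Qed.

Let d_gt0 : 0 < d. Proof. by rewrite divr_gt0 // ltr0n. Qed.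

Let d_le_dx : d <= dx.
Proof. by rewrite ler_pdivrMr ?ltr0n // ler_peMr ?ler1n ?(ltW dx_gt0). Qed.

Lemma grade_raised_gt0 m : 0 < G1 m.
Proof.
by rewrite G1E; apply: ltr_wpDr; [rewrite le_max lexx orbT | apply: ltr_wpDl].
Qed.

Lemma grade_le_raised m : G0 m <= G1 m.
Proof. by rewrite G0E G1E; apply: shifted_max0_le. Qed.

Lemma grade_target_monotone m m' : m <= m' -> G0 m <= G0 m'.
Proof.
by move=> le_mm'; rewrite !G0E lerD2l; apply: le_max2; rewrite // /c lerD2r.
Qed.

Lemma grade_gain_antimonotone m m' : m <= m' -> G1 m' * G0 m <= G1 m * G0 m'.
Proof.
move=> le_mm'; rewrite !G0E !G1E.
by apply: shifted_max0_cross_le; rewrite // /c lerD2r.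
Qed.

Let xi_lt1 : xi < 1.
Proof. by rewrite (le_lt_trans _ xi_dx_lt1) // lerDl ltW. Qed.

Lemma dlogUE (alpha : 'I_n -> R) m : 0 < alpha i ->
  dlogU x i xi dx alpha m =
  if 0 < G0 m then
    (alpha i * (ln (G1 m) - ln (G0 m)) +
     (1 - alpha i) * (ln (1 - (xi + dx)) - ln (1 - xi)))%:E
  else +oo%E.
Proof.
move=> alpha_gt0; rewrite /dlogU /logU !upd_same weighted_elog_diff ?subr_gt0 //.
exact: grade_raised_gt0.
Qed.

Lemma log_gain_antimonotone m m' : m <= m' -> 0 < G0 m ->
  ln (G1 m') - ln (G0 m') <= ln (G1 m) - ln (G0 m).
Proof.
move=> le_mm' G0m_gt0.
have G0m'_gt0 : 0 < G0 m'.
  exact: lt_le_trans G0m_gt0 (grade_target_monotone _ _ le_mm').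
rewrite lerBrDr addrAC lerBlDr -!lnM ?posrE ?grade_raised_gt0 //.
by rewrite ler_ln ?posrE ?mulr_gt0 ?grade_raised_gt0 // grade_gain_antimonotone.
Qed.

Lemma dlogU_target_antimonotone (alpha : 'I_n -> R) m m' :
  0 < alpha i -> m <= m' ->
  (dlogU x i xi dx alpha m' <= dlogU x i xi dx alpha m)%E.
Proof.
move=> alpha_gt0 le_mm'; rewrite !dlogUE //.
have [G0m_gt0|_] := ltP 0 (G0 m); last by rewrite leey.
rewrite (lt_le_trans G0m_gt0 (grade_target_monotone _ _ le_mm')) lee_fin lerD2r.
by apply: ler_wpM2l; [exact: ltW | exact: log_gain_antimonotone].
Qed.

Lemma dlogU_ability_monotone (alpha alpha' : 'I_n -> R) m :
  0 < alpha i -> 0 < alpha' i -> alpha i <= alpha' i ->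
  (dlogU x i xi dx alpha m <= dlogU x i xi dx alpha' m)%E.
Proof.
move=> alpha_gt0 alpha'_gt0 le_alpha; rewrite !dlogUE //.
case: ifP => G0m_gt0; last by rewrite lexx.
rewrite lee_fin convex_combination_monotone //.
  by rewrite subr_ge0 ler_ln ?posrE ?grade_raised_gt0 // grade_le_raised.
by rewrite subr_le0 ler_ln ?posrE ?subr_gt0 // lerD2l lerN2 lerDl ltW.
Qed.

End CurvedExam.

Theorem mainTheorem3 (R : realType) (n : nat) (i : 'I_n)
  (x : 'I_n -> R) (xi dx : R) :
  (2 <= n)%N ->
  (forall j, j != i -> 0 <= x j <= 1) ->
  0 <= xi -> xi < 1 -> 0 < dx -> xi + dx < 1 ->
  (* non-increasing in the target mean m *)
  (forall (alpha : 'I_n -> R) (m m' : R),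
     (forall j, 0 < alpha j < 1) -> 0 < m < 1 -> 0 < m' < 1 -> m <= m' ->
     (dlogU x i xi dx alpha m' <= dlogU x i xi dx alpha m)%E)
  /\
  (* non-decreasing in each ability alpha_j *)
  (forall (alpha : 'I_n -> R) (m : R) (j : 'I_n) (a a' : R),
     (forall k, 0 < alpha k < 1) -> 0 < m < 1 ->
     0 < a < 1 -> 0 < a' < 1 -> a <= a' ->
     (dlogU x i xi dx (upd alpha j a) m <= dlogU x i xi dx (upd alpha j a') m)%E).
Proof.
move=> _ _ xi_ge0 _ dx_gt0 xi_dx_lt1; split.
  move=> alpha m m' alpha01 _ _ le_mm'.
  by apply: dlogU_target_antimonotone; case/andP: (alpha01 i).
move=> alpha m j a a' alpha01 _ /andP[a_gt0 _] /andP[a'_gt0 _] le_aa'.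
have [<-|ne_ij] := eqVneq i j.
  by apply: dlogU_ability_monotone; rewrite ?upd_same.
by apply: dlogU_ability_monotone; rewrite ?upd_other //; case/andP: (alpha01 i).
Qed.
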